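(* Let $G$ be a graph, let $R\subseteq V(G)$ be the vertex set of an induced copy of $P_3$ in $G$, and let $C\subseteq V(G)\setminus R$ be a clique in $G$ with at most two vertices, each of odd degree in $G$. Assume every vertex of $R$ is adjacent to every vertex of $C$. Then one can admissibly remove from $G$ a subset of $C\cup R$ containing all of $C$, such that the remaining vertices of $R$ form a clique with at most two vertices, each of odd degree in the remaining graph.
   Context: $P_3$ denotes the path with three edges (four vertices). Removing a set $T$ of vertices from a graph $G$ is a simple admissible removal if $T$ is an independent set in $G$ and the number of edges between $T$ and $V(G)\setminus T$ is even. Removing a set of vertices is admissible if it can be realised by a sequence of simple admissible removals, each performed in the graph remaining after the previous ones. Degrees are always taken in the current remaining graph. *)

(* A (finite, simple) graph G is a finType T of vertices with a
   symmetric irreflexive adjacency relation e. A "remaining graph" is the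
   induced subgraph of G on a vertex set S : {set T}. *)
From mathcomp Require Import all_boot.
Set Implicit Arguments. Unset Strict Implicit. Unset Printing Implicit Defensive.

Section Graphs.
Variable T : finType.
Variable e : rel T.

Definition deg_in (S : {set T}) (v : T) : nat := #|[set u in S | e v u]|.

Definition independent_in (S X : {set T}) : Prop :=
  X \subset S /\ forall x y, x \in X -> y \in X -> ~~ e x y.

Definition cut_size (S X : {set T}) : nat :=
  #|[set p : T * T | (p.1 \in X) && (p.2 \in S :\: X) && e p.1 p.2]|.

Definition simple_admissible (S X : {set T}) : Prop :=
  independent_in S X /\ ~~ odd (cut_size S X).

Inductive admissible : {set T} -> {set T} -> Prop :=
  | adm_nil S : admissible S set0
  | adm_cons S Y X : simple_admissible S Y -> admissible (S :\: Y) X ->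
                     admissible S (Y :|: X).

Definition clique (X : {set T}) : Prop :=
  forall x y, x \in X -> y \in X -> x != y -> e x y.

Definition induced_P3 (R : {set T}) : Prop :=
  exists a b c d : T,
    [/\ R = [set a; b; c; d], uniq [:: a; b; c; d],
        [/\ e a b, e b c & e c d] &
        [/\ ~~ e a c, ~~ e b d & ~~ e a d]].

End Graphs.

From mathcomp Require Import all_boot.
Set Implicit Arguments. Unset Strict Implicit. Unset Printing Implicit Defensive.

(* Only the parities of the degrees of the vertices of R and C matter, and
   removing an independent set Y is allowed exactly when the degrees of Y in the
   current graph have even sum; removing a vertex flips the degree parity of
   each of its neighbours.  The configuration is therefore captured by the
   pattern graph on 4 + |C| <= 6 indices (a path 0-1-2-3 completely joined to a
   clique) together with the four degree parities of the path vertices, and for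
   each of the 48 resulting patterns a bounded search finds a removal sequence.
   That sequence is transported back to G along the embedding of the pattern. *)

Lemma odd_sum_count (I : Type) (s : seq I) (g : I -> nat) :
  odd (\sum_(i <- s) g i) = odd (count (fun i => odd (g i)) s).
Proof. by elim: s => [|i s IHs]; rewrite ?big_nil // big_cons /= oddD IHs oddD oddb. Qed.

Section Degrees.
Variables (T : finType) (e : rel T).

Lemma deg_inC_add (W : {set T}) v :
  deg_in e (~: W) v + #|[set u in W | e v u]| = deg_in e setT v.
Proof.
rewrite /deg_in -(cardsID W [set u in setT | e v u]) addnC.
by congr (_ + _); apply: eq_card => u; rewrite !inE; case: (u \in W); rewrite ?andbT ?andbF.
Qed.

Lemma cut_size_independent (S X : {set T}) : independent_in e S X ->
  cut_size e S X = \sum_(x in X) deg_in e S x.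
Proof.
case=> _ indX; rewrite /cut_size.
have -> : [set p : T * T | (p.1 \in X) && (p.2 \in S :\: X) && e p.1 p.2]
        = [set p : T * T | (p.1 \in X) && ((p.2 \in S) && e p.1 p.2)].
  apply/setP=> [[x y]]; rewrite !inE /=.
  case xX: (x \in X) => //=; case yX: (y \in X) => /=.
    by rewrite (negbTE (indX x y xX yX)) !andbF.
  by case: (y \in S).
rewrite -sum1_card big_mkcond /=.
rewrite (eq_bigr (fun p : T * T => ((p.1 \in X) && ((p.2 \in S) && e p.1 p.2)) : nat));
  last by move=> p _; rewrite inE; case: (_ && _).
rewrite -(pair_big xpredT xpredT (fun x y => ((x \in X) && ((y \in S) && e x y)) : nat)) /=.
rewrite [RHS]big_mkcond /=; apply: eq_bigr => x _.
case: (x \in X) => /=; last by rewrite big1.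
rewrite /deg_in -sum1_card [RHS]big_mkcond /=; apply: eq_bigr => y _.
by rewrite inE; case: (_ && _).
Qed.

End Degrees.

Definition p3_clique_adj (u v : nat) : bool :=
  if (u < 4) && (v < 4) then (u == v.+1) || (v == u.+1) else u != v.

Fixpoint subseqs (I : Type) (s : seq I) : seq (seq I) :=
  if s is x :: s' then let t := subseqs s' in t ++ [seq x :: y | y <- t]
  else [:: [::]].

Section PatternSearch.
Variables (m : nat) (p : nat -> bool).

(* [p u] is the degree parity of [u] in the whole graph and [Z] lists the
   indices removed so far. *)
Definition odd_after (Z : seq nat) (u : nat) : bool :=
  p u (+) odd (count (p3_clique_adj u) Z).

Definition removable (Z Y : seq nat) : bool :=
  [&& all (gtn m) Y, all (fun u => u \notin Z) Y, uniq Y,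
      all (fun u => all (fun v => ~~ p3_clique_adj u v) Y) Y &
      ~~ odd (count (odd_after Z) Y)].

Definition reduced (Z : seq nat) : bool :=
  let rest := [seq u <- iota 0 4 | u \notin Z] in
  [&& all (mem Z) (iota 4 (m - 4)), size rest <= 2,
      all (fun u => all (fun v => (u == v) || p3_clique_adj u v) rest) rest &
      all (odd_after Z) rest].

(* [behead] drops the empty subsequence, which [subseqs] lists first. *)
Fixpoint reducible (n : nat) (Z : seq nat) : bool :=
  reduced Z ||
  if n is n'.+1 then
    has (fun Y => removable Z Y && reducible n' (Z ++ Y))
        (behead (subseqs [seq u <- iota 0 m | u \notin Z]))
  else false.

End PatternSearch.

(* Indices from 4 on stand for the vertices of C, which have odd degree. *)
Definition p3_parities (b0 b1 b2 b3 : bool) (u : nat) : bool :=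
  nth true [:: b0; b1; b2; b3] u.

Lemma p3_clique_reducible n b0 b1 b2 b3 : n <= 2 ->
  reducible (4 + n) (p3_parities b0 b1 b2 b3) (4 + n) [::].
Proof.
by case: n => [|[|[|]]] //; case: b0; case: b1; case: b2; case: b3; vm_compute.
Qed.

Section Embedding.
Variables (T : finType) (e : rel T) (m : nat) (f : nat -> T) (p : nat -> bool).
Hypothesis f_inj : {in gtn m &, injective f}.
Hypothesis f_adj : {in gtn m &, forall u v, e (f u) (f v) = p3_clique_adj u v}.
Hypothesis f_odd : {in gtn m, forall u, odd (deg_in e setT (f u)) = p u}.

Definition vset (Z : seq nat) : {set T} := [set x in map f Z].

Lemma in_vset Z x : (x \in vset Z) = (x \in map f Z).
Proof. by rewrite inE. Qed.

Lemma mem_vset Z u : all (gtn m) Z -> u < m -> (f u \in vset Z) = (u \in Z).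
Proof.
move=> /allP Zm um; rewrite in_vset; apply/mapP/idP => [[w wZ /f_inj fuw]|]; last by exists u.
by rewrite fuw //; apply: Zm.
Qed.

Lemma vset_cat Z Y : vset (Z ++ Y) = vset Z :|: vset Y.
Proof. by apply/setP=> x; rewrite !inE map_cat mem_cat. Qed.

Lemma odd_deg_vset Z u : all (gtn m) Z -> uniq Z -> u < m ->
  odd (deg_in e (~: vset Z) (f u)) = odd_after p Z u.
Proof.
move=> /allP Zm Zuniq um.
have fZuniq : uniq (map f Z).
  by rewrite map_inj_in_uniq // => v w vZ wZ; apply: f_inj; apply: Zm.
have adj_vset : #|[set y in vset Z | e (f u) y]| = count (p3_clique_adj u) Z.
  have -> : [set y in vset Z | e (f u) y] = [set y in filter (e (f u)) (map f Z)].
    by apply/setP=> y; rewrite !inE mem_filter andbC.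
  rewrite cardsE (card_uniqP (filter_uniq _ fZuniq)) size_filter count_map.
  by apply: eq_in_count => w wZ; rewrite /= f_adj //; apply: Zm.
have := congr1 odd (deg_inC_add e (vset Z) (f u)).
rewrite adj_vset oddD f_odd // /odd_after => <-.
by rewrite addbK.
Qed.

Lemma simple_admissible_vset Z Y : all (gtn m) Z -> uniq Z -> removable m p Z Y ->
  simple_admissible e (~: vset Z) (vset Y).
Proof.
move=> Zm Zuniq /and5P[/allP Ym /allP YnotZ Yuniq /allP Yindep even_Y].
have indepY : independent_in e (~: vset Z) (vset Y).
  split=> [|x y]; last first.
    rewrite !in_vset => /mapP[u uY ->] /mapP[v vY ->].
    by rewrite f_adj ?(allP (Yindep u uY)) //; apply: Ym.
  apply/subsetP=> x; rewrite in_vset => /mapP[u uY ->].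
  by rewrite in_setC mem_vset ?YnotZ //; apply: Ym.
split=> //; rewrite cut_size_independent //.
rewrite (eq_bigl (mem (map f Y))); last by move=> x; rewrite in_vset.
rewrite -big_uniq /=; last first.
  by rewrite map_inj_in_uniq // => u v uY vY; apply: f_inj; apply: Ym.
rewrite big_map odd_sum_count (eq_in_count (a2 := odd_after p Z)) //.
by move=> u uY; apply: odd_deg_vset => //; apply: Ym.
Qed.

Lemma admissible_of_reducible n Z : all (gtn m) Z -> uniq Z -> reducible m p n Z ->
  exists2 W, admissible e (~: vset Z) (vset W) &
    [&& reduced m p (Z ++ W), uniq (Z ++ W) & all (gtn m) (Z ++ W)].
Proof.
have stop Z' : all (gtn m) Z' -> uniq Z' -> reduced m p Z' ->
    exists2 W, admissible e (~: vset Z') (vset W) &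
      [&& reduced m p (Z' ++ W), uniq (Z' ++ W) & all (gtn m) (Z' ++ W)].
  move=> Zm Zuniq red; exists [::]; last by rewrite cats0 red Zuniq.
  exact: adm_nil.
elim: n Z => [|n IHn] Z Zm Zuniq /=; first by rewrite orbF; apply: stop.
case/orP=> [|/hasP[Y _ /andP[remY]]]; first exact: stop.
have /and3P[Ym YnotZ Yuniq] : [&& all (gtn m) Y, all (fun u => u \notin Z) Y & uniq Y].
  by case/and5P: remY => -> -> ->.
have ZYm : all (gtn m) (Z ++ Y) by rewrite all_cat Zm.
have ZYuniq : uniq (Z ++ Y).
  by rewrite cat_uniq Zuniq Yuniq andbT; apply/hasPn => u /(allP YnotZ).
case/IHn=> // W admW; rewrite -catA => ZYW; exists (Y ++ W) => //.
rewrite vset_cat; apply: adm_cons; first exact: simple_admissible_vset.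
by rewrite setDE -setCU -vset_cat.
Qed.

Lemma removal_of_reducible (R C : {set T}) : 4 <= m ->
  R = vset (iota 0 4) -> C = vset (iota 4 (m - 4)) -> reducible m p m [::] ->
  exists X : {set T},
   [/\ C \subset X, X \subset C :|: R, admissible e [set: T] X,
       clique e (R :\: X) & #|R :\: X| <= 2] /\
   forall v, v \in R :\: X -> odd (deg_in e (~: X) v).
Proof.
move=> m_ge4 -> -> /(admissible_of_reducible (Z := [::]) isT isT)[W admW].
case/and3P=> /and4P[/allP CW rest_small rest_clique rest_odd] Wuniq Wm.
set rest := [seq u <- iota 0 4 | u \notin W] in rest_small rest_clique rest_odd.
have path_m u : u \in iota 0 4 -> u < m.
  by rewrite mem_iota => /andP[_ /leq_trans]; apply.
have rest_m u : u \in rest -> u < m by rewrite mem_filter => /andP[_ /path_m].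
have R_minus_X : vset (iota 0 4) :\: vset W = vset rest.
  apply/setP=> x; rewrite in_setD !in_vset; apply/andP/mapP => [[xW /mapP[u u4 xu]]|[u]].
    by exists u; rewrite // mem_filter u4 andbT -(mem_vset Wm (path_m u u4)) in_vset -xu.
  rewrite mem_filter => /andP[uW u4] ->; split; last exact: map_f.
  by rewrite -in_vset mem_vset // path_m.
exists (vset W); split; first split.
- by apply/subsetP=> x; rewrite in_vset => /mapP[u /CW uW ->]; rewrite in_vset map_f.
- apply/subsetP=> x; rewrite in_vset => /mapP[u uW ->]; rewrite in_setU !in_vset.
  have um : u < m by apply: (allP Wm).
  case: (ltnP u 4) => u4; apply/orP; [right | left]; apply: map_f.
    by rewrite mem_iota.
  by rewrite mem_iota u4 subnKC.
- by rewrite -setC0.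
- rewrite R_minus_X => x y; rewrite !in_vset => /mapP[u uR ->] /mapP[v vR ->] fu_fv.
  have /orP[/eqP uv|] := allP (allP rest_clique u uR) v vR; first by rewrite uv eqxx in fu_fv.
  by rewrite f_adj //; apply: rest_m.
- by rewrite R_minus_X cardsE (leq_trans (card_size _)) // size_map.
- move=> x; rewrite R_minus_X in_vset => /mapP[u uR ->].
  by rewrite odd_deg_vset ?(allP rest_odd) ?rest_m.
Qed.

End Embedding.

Section PathJoinClique.
Variables (T : finType) (e : rel T) (a b c d : T) (C : {set T}).
Hypotheses (e_sym : symmetric e) (e_irr : irreflexive e).
Hypothesis abcd_uniq : uniq [:: a; b; c; d].
Hypotheses (ab : e a b) (bc : e b c) (cd : e c d).
Hypotheses (nac : ~~ e a c) (nbd : ~~ e b d) (nad : ~~ e a d).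
Hypothesis C_disjoint : [disjoint C & [set a; b; c; d]].
Hypothesis C_clique : clique e C.
Hypothesis C_odd : forall v, v \in C -> odd (deg_in e [set: T] v).
Hypothesis C_join : forall r v, r \in [set a; b; c; d] -> v \in C -> e r v.

Let s := [:: a; b; c; d] ++ enum C.

Lemma size_path_clique : size s = 4 + #|C|.
Proof. by rewrite size_cat cardE. Qed.

Lemma nth_path u : u < 4 -> nth a s u \in [set a; b; c; d].
Proof. by case: u => [|[|[|[|u]]]] // _; rewrite !inE eqxx ?orbT. Qed.

Lemma nth_clique u : 4 <= u < size s -> nth a s u \in C.
Proof.
case/andP=> u_ge4 u_lt; rewrite nth_cat /= ltnNge u_ge4 /= -mem_enum mem_nth //.
by rewrite -(ltn_add2l 4) subnKC // -cardE -size_path_clique.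
Qed.

Lemma uniq_path_clique : uniq s.
Proof.
rewrite cat_uniq abcd_uniq enum_uniq andbT /=; apply/hasPn => x; rewrite mem_enum => xC.
by apply: contraFN (disjointFr C_disjoint xC); rewrite !inE -!orbA.
Qed.

Lemma adj_path_clique :
  {in gtn (size s) &, forall u v, e (nth a s u) (nth a s v) = p3_clique_adj u v}.
Proof.
move=> u v; rewrite !inE => u_lt v_lt; rewrite /p3_clique_adj.
case: (ltnP u 4) => u4; case: (ltnP v 4) => v4 /=.
- case: u v u4 v4 {u_lt v_lt} => [|[|[|[|u]]]] [|[|[|[|v]]]] //= _ _;
  by rewrite ?e_irr // ?[e b a]e_sym ?[e c b]e_sym ?[e d c]e_sym
     ?[e c a]e_sym ?[e d b]e_sym ?[e d a]e_sym ?ab ?bc ?cd ?(negbTE nac) ?(negbTE nbd)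
     ?(negbTE nad).
- by rewrite C_join ?nth_path ?nth_clique ?v4 // neq_ltn (leq_trans u4 v4).
- by rewrite e_sym C_join ?nth_path ?nth_clique ?u4 // neq_ltn (leq_trans v4 u4) orbT.
have [->|uv] := eqVneq u v; first by rewrite e_irr.
by apply: C_clique; rewrite ?nth_clique ?u4 ?v4 // nth_uniq // uniq_path_clique.
Qed.

Lemma inj_path_clique : {in gtn (size s) &, injective (nth a s)}.
Proof. by move=> u v u_lt v_lt /eqP; rewrite nth_uniq ?uniq_path_clique // => /eqP. Qed.

Lemma odd_deg_path_clique :
  {in gtn (size s), forall u, odd (deg_in e [set: T] (nth a s u)) =
    p3_parities (odd (deg_in e [set: T] a)) (odd (deg_in e [set: T] b))
                (odd (deg_in e [set: T] c)) (odd (deg_in e [set: T] d)) u}.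
Proof.
move=> u; rewrite inE => u_lt.
case: (ltnP u 4) => [|u4]; first by case: u {u_lt} => [|[|[|[|]]]].
by rewrite C_odd ?nth_clique ?u4 // /p3_parities nth_default.
Qed.

Lemma path_vset : [set a; b; c; d] = vset (nth a s) (iota 0 4).
Proof. by apply/setP=> x; rewrite in_vset !inE -!orbA. Qed.

Lemma clique_vset : C = vset (nth a s) (iota 4 (size s - 4)).
Proof.
apply/setP=> x; rewrite in_vset size_path_clique addKn.
rewrite (_ : iota 4 #|C| = map (addn 4) (iota 0 #|C|)); last by rewrite -iotaDl.
rewrite -map_comp (eq_map (g := nth a (enum C))) => [|i]; last by rewrite /= add0n.
by rewrite cardE -/(mkseq _ _) mkseq_nth mem_enum.
Qed.

End PathJoinClique.

Theorem mainTheorem20 (T : finType) (e : rel T)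
    (e_sym : symmetric e) (e_irr : irreflexive e)
    (R C : {set T}) :
  induced_P3 e R ->
  [disjoint C & R] ->
  clique e C -> #|C| <= 2 ->
  (forall v, v \in C -> odd (deg_in e [set: T] v)) ->
  (forall r c, r \in R -> c \in C -> e r c) ->
  exists X : {set T},
   (    [/\ C \subset X, X \subset C :|: R,
        admissible e [set: T] X,
        clique e (R :\: X) & #|R :\: X| <= 2] /\
        forall v, v \in R :\: X -> odd (deg_in e (~: X) v)).
Proof.
move=> [a [b [c [d [-> abcd_uniq [ab bc cd] [nac nbd nad]]]]]].
move=> C_disj C_clique C_small C_odd C_join.
apply: (removal_of_reducible (inj_path_clique abcd_uniq C_disj)
  (adj_path_clique e_sym e_irr abcd_uniq ab bc cd nac nbd nad C_disj C_clique C_join)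
  (odd_deg_path_clique C_odd)).
- by rewrite size_path_clique.
- exact: path_vset.
- exact: clique_vset.
- by rewrite size_path_clique; apply: p3_clique_reducible.
Qed.
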